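(* Let $G$ be a finitely generated group with $G=G^0\times\langle x\rangle$, where $\langle x\rangle$ is infinite cyclic. Then for every $n\geq1$ the number of conjugacy classes of subgroups of index $n$ in $G$ equals the number of pairs $(\mathcal{O},[W])$ where $\mathcal{O}$ runs over isomorphism classes of finite transitive $G^0$-sets with $|\mathcal{O}|$ dividing $n$ and $[W]$ runs over isomorphism classes of irreducible complex representations of $\mathrm{Aut}_{G^0}(\mathcal{O})$.
   Context: $\mathrm{Aut}_{G^0}(\mathcal{O})$ denotes the group of $G^0$-equivariant bijections of the $G^0$-set $\mathcal{O}$. *)

From HB Require Import structures.
From mathcomp Require Import all_boot all_order all_algebra all_fingroup.
From mathcomp Require Import all_field all_character.
From mathcomp Require Import boolp.
From Stdlib Require Import List.

Set Implicit Arguments.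
Unset Strict Implicit.
Unset Printing Implicit Defensive.

Record Grp := {
  gcar :> Type;
  gmul : gcar -> gcar -> gcar;
  gone : gcar;
  ginv : gcar -> gcar;
  gmulA : forall a b c, gmul a (gmul b c) = gmul (gmul a b) c;
  gmul1 : forall a, gmul gone a = a;
  gmulV : forall a, gmul (ginv a) a = gone
}.

Section GroupDefs.
Variable G : Grp.
Local Notation "a * b" := (gmul a b).
Local Notation "1" := (gone G).

Definition gpow (x : G) (k : int) : G :=
  match k with
  | Posz n => iter n (gmul x) 1
  | Negz n => ginv (iter n.+1 (gmul x) 1)
  end.

Definition is_subgroup (H : G -> Prop) : Prop :=
  H 1 /\ (forall a b, H a -> H b -> H (a * b)) /\ (forall a, H a -> H (ginv a)).

Inductive generated (S : list G) : G -> Prop :=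
  | gen_one : generated S 1
  | gen_in s : List.In s S -> generated S s
  | gen_mul a b : generated S a -> generated S b -> generated S (a * b)
  | gen_inv a : generated S a -> generated S (ginv a).

Definition finitely_generated : Prop :=
  exists S : list G, forall g, generated S g.

(* G = G0 x <x> (internal direct product) with <x> infinite cyclic:
   G0 is a subgroup, x centralises G0, and every element of G is written
   uniquely as h * x^k with h in G0, k in Z (uniqueness for h = 1 gives
   that <x> is infinite cyclic and meets G0 trivially). *)
Definition direct_prod_infcyclic (G0 : G -> Prop) (x : G) : Prop :=
  is_subgroup G0 /\
  (forall h, G0 h -> h * x = x * h) /\
  (forall g, exists h k, G0 h /\ g = h * gpow x k) /\
  (forall h h' k k', G0 h -> G0 h' -> h * gpow x k = h' * gpow x k' ->
       h = h' /\ k = k').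

(* H has index n in G: there are exactly n left cosets t_i H. *)
Definition has_index (H : G -> Prop) (n : nat) : Prop :=
  exists t : 'I_n -> G, forall g, exists! i, H (ginv (t i) * g).

Definition conj_subgroups (H K : G -> Prop) : Prop :=
  exists g, forall h, H h <-> K (g * h * ginv g).

Variable G0 : G -> Prop.

(* A finite G0-set: a finite type with an action of the elements of G0
   (values of act on elements outside G0 are irrelevant and unconstrained). *)
Record GSet := {
  gs_car : finType;
  gs_act : G -> gs_car -> gs_car;
  gs_act1 : forall o, gs_act 1 o = o;
  gs_actM : forall g h o, G0 g -> G0 h -> gs_act (g * h) o = gs_act g (gs_act h o)
}.


Arguments gs_act : clear implicits.
Arguments gs_car : clear implicits.
Definition gset_transitive (X : GSet) : Prop :=
  0 < #|gs_car X| /\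
  forall o o' : gs_car X, exists g, G0 g /\ gs_act X g o = o'.

Definition gset_iso (X Y : GSet) : Prop :=
  exists f : gs_car X -> gs_car Y, bijective f /\
    forall g o, G0 g -> f (gs_act X g o) = gs_act Y g (f o).

Definition aut_set (X : GSet) : {set {perm gs_car X}} :=
  [set p : {perm gs_car X} |
     `[< forall g o, G0 g -> p (gs_act X g o) = gs_act X g (p o) >] ].

Lemma aut_group_set (X : GSet) : group_set (aut_set X).
Proof.
apply/group_setP; split.
  by rewrite inE; apply/asboolP => g o _; rewrite !perm1.
move=> p q; rewrite !inE => /asboolP Hp /asboolP Hq; apply/asboolP => g o Hg.
by rewrite !permM Hp // Hq.
Qed.

Canonical aut_group (X : GSet) := Group (aut_group_set X).

End GroupDefs.

Definition class_reps {A : Type} (P : A -> Prop) (R : A -> A -> Prop)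
  (s : list A) : Prop :=
  Forall P s /\ ForallOrdPairs (fun a b => ~ R a b) s /\
  (forall a, P a -> Exists (R a) s).

Definition num_classes {A : Type} (P : A -> Prop) (R : A -> A -> Prop)
  (N : nat) : Prop :=
  exists s, class_reps P R s /\ length s = N.

Definition num_irr_reps (gT : finGroupType) (A : {group gT}) (N : nat) : Prop :=
  num_classes
    (fun r : {d : nat & mx_representation algC A d} => mx_irreducible (projT2 r))
    (fun r r' => mx_rsim (projT2 r) (projT2 r'))
    N.

Definition num_conj_classes_index (G : Grp) (n N : nat) : Prop :=
  num_classes (fun H : G -> Prop => is_subgroup H /\ has_index H n)
              (@conj_subgroups G) N.

Definition num_pairs (G : Grp) (G0 : G -> Prop) (n N : nat) : Prop :=
  exists (Os : list (GSet G0)) (ks : list nat),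
    class_reps (fun X => gset_transitive X /\ (#|gs_car X| %| n)%N)
               (@gset_iso G G0) Os /\
    Forall2 (fun X k => num_irr_reps (aut_group X) k) Os ks /\
    sumn ks = N.

From Pilot Require Import Defs.
From mathcomp Require Import all_boot all_order all_algebra all_fingroup.
From mathcomp Require Import all_field all_character.
From mathcomp Require Import boolp zify.

(* Subgroups of index n of G correspond, up to conjugacy, to transitive G-sets
   of size n up to isomorphism, through point stabilisers.  As G = G0 x <x>, a
   transitive G-set Y is rebuilt from a G0-orbit O in it, the first time k at
   which the x-orbit of a point returns to O, and the automorphism a of the
   G0-set O induced by x^k: Y is O x Z/k, with x shifting the second coordinate
   and applying a when it wraps around.  Two such data give isomorphic G-sets
   iff the G0-sets are isomorphic, the k agree and the automorphisms are
   conjugate in Aut_G0(O).  Hence the count is the sum, over transitive G0-sets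
   O with |O| dividing n, of the number of conjugacy classes of Aut_G0(O), which
   is its number of irreducible complex representations.  Finite generation
   leaves only finitely many such O, since a G0-set is determined by the action
   of the G0-parts of the generators. *)

Set Implicit Arguments.
Unset Strict Implicit.
Unset Printing Implicit Defensive.

Import GRing.Theory.

Lemma size_length (T : Type) (s : seq T) : size s = length s.
Proof. by elim: s => //= a s ->. Qed.

Lemma InP (T : eqType) (y : T) (s : seq T) : reflect (List.In y s) (y \in s).
Proof.
elim: s => [|a s IH] /=; first by constructor.
rewrite inE; apply: (iffP orP) => [[/eqP->|/IH]|[->|/IH]]; by [left | right].
Qed.

Lemma nth_In (T : Type) (y0 : T) (s : seq T) j :
  j < size s -> List.In (nth y0 s j) s.
Proof.
elim: s j => [|a s IH] [|j] //= lt; first by left.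
by right; apply: IH.
Qed.

Lemma In_nth (T : Type) (y0 : T) (s : seq T) y :
  List.In y s -> exists2 j, j < size s & nth y0 s j = y.
Proof.
elim: s => [|a s IH] //= [->|/IH [j lt ej]]; first by exists 0.
by exists j.+1.
Qed.

Lemma ForallOrdPairs_nth (T : Type) (Q : T -> T -> Prop) (y0 : T) (s : seq T) i j :
  List.ForallOrdPairs Q s -> i < j < size s -> Q (nth y0 s i) (nth y0 s j).
Proof.
elim: s i j => [|a s IH] i j Hs /andP[ij lt]; first by move: lt; rewrite ltn0.
have [Ha {}Hs] : List.Forall (Q a) s /\ List.ForallOrdPairs Q s by inversion Hs.
case: j ij lt => [|j] ij lt //; case: i ij => [|i] ij /=.
  by move/List.Forall_forall: Ha; apply; apply: nth_In.
by apply: IH => //; apply/andP; split.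
Qed.

Lemma Forall2_map_r (A B : Type) (P : A -> B -> Prop) (f : A -> B) (s : seq A) :
  (forall a, P a (f a)) -> List.Forall2 P s (List.map f s).
Proof. by move=> Pf; elim: s => [|a s IH] /=; constructor. Qed.

Lemma class_reps_map (I : eqType) (A : Type) (P : A -> Prop) (R : A -> A -> Prop)
    (l : seq I) (f : I -> A) :
  uniq l ->
  (forall i, i \in l -> P (f i)) ->
  (forall i j, i \in l -> j \in l -> R (f i) (f j) -> i = j) ->
  (forall a, P a -> exists2 i, i \in l & R a (f i)) ->
  class_reps P R (List.map f l).
Proof.
move=> Ul HP Hinj Hcov; split; [|split].
- by apply/List.Forall_forall => a /List.in_map_iff [i [<- /InP]]; apply: HP.
- elim: l Ul HP Hinj {Hcov} => [|i l IH] /=; first by constructor.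
  case/andP=> il Ul HP Hinj; constructor.
    apply/List.Forall_forall => a /List.in_map_iff [j [<- /InP jl]] Rij.
    have := Hinj i j; rewrite mem_head inE jl orbT => /(_ isT isT Rij) eij.
    by rewrite eij jl in il.
  apply: IH => // [i' i'l|i' j i'l jl]; first by apply: HP; rewrite inE i'l orbT.
  by apply: Hinj; rewrite inE ?i'l ?jl orbT.
- move=> a /Hcov [i il Rai]; apply/List.Exists_exists; exists (f i); split => //.
  by apply/List.in_map_iff; exists i; split => //; apply/InP.
Qed.

Lemma class_reps_of_cover (A : Type) (P : A -> Prop) (R : A -> A -> Prop) (L : seq A) :
  (forall a, R a a) -> (forall a b c, R a b -> R b c -> R a c) ->
  (forall a, P a -> exists b, [/\ List.In b L, P b & R a b]) ->
  exists s, class_reps P R s.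
Proof.
move=> Rrefl Rtr Hcov.
suff [s [Ps Ds Cs]] : exists s, [/\ List.Forall P s, List.ForallOrdPairs (fun a b => ~ R a b) s &
    forall b, List.In b L -> P b -> List.Exists (R b) s].
  exists s; split => //; split => // a /Hcov [b [bL Pb Rab]].
  have /List.Exists_exists [c [cs Rbc]] := Cs b bL Pb.
  by apply/List.Exists_exists; exists c; split => //; apply: Rtr Rbc.
elim: L {Hcov} => [|b L [s [Ps Ds Cs]]]; first by exists nil; split => [||? []]; constructor.
have [[Pb nE]|H] := EM (P b /\ ~ List.Exists (R b) s).
  exists (b :: s); split; first by constructor.
    constructor => //; apply/List.Forall_forall => c cs Rbc; apply: nE.
    by apply/List.Exists_exists; exists c.
  move=> c [<-|cL] Pc; first by constructor.
  by apply: List.Exists_cons_tl; apply: Cs.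
exists s; split => // c [<-|cL] Pc; last exact: Cs.
by have [//|nE] := EM (List.Exists (R b) s); case: (H (conj Pc nE)).
Qed.

Lemma num_irr_reps_Nirr (gT : finGroupType) (A : {group gT}) : num_irr_reps A (Nirr A).
Proof.
exists [seq existT (fun d => mx_representation algC A d) _ ('Chi_i) | i <- enum (Iirr A)].
split; last by rewrite -size_length size_map size_enum_ord.
apply: class_reps_map; first exact: enum_uniq.
- by move=> i _; apply: socle_irr.
- move=> i j _ _ /= /cfRepr_rsimP/eqP; rewrite !irrRepr; exact: irr_inj.
- move=> [d rG] /= irrG.
  have /irrP [i Hi] : cfRepr rG \in irr A.
    by apply/irr_reprP; exists (Representation rG).
  exists i; first by rewrite mem_enum.
  by apply/cfRepr_rsimP; rewrite irrRepr Hi.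
Qed.

Local Notation act X := (@gs_act _ _ X).

Section GroupLaws.
Variable G : Grp.
Local Notation "a * b" := (gmul a b).
Local Notation "1" := (gone G).

Lemma gmulgV (a : G) : a * ginv a = 1.
Proof.
have e : a * ginv a = ginv (ginv a) * ginv a * (a * ginv a).
  by rewrite gmulV gmul1.
by rewrite e -gmulA (gmulA (ginv a)) gmulV gmul1 gmulV.
Qed.

Lemma gmulg1 (a : G) : a * 1 = a.
Proof. by rewrite -(gmulV a) gmulA gmulgV gmul1. Qed.

Lemma gmulKg (a b : G) : ginv a * (a * b) = b.
Proof. by rewrite gmulA gmulV gmul1. Qed.

Lemma gmulKVg (a b : G) : a * (ginv a * b) = b.
Proof. by rewrite gmulA gmulgV gmul1. Qed.

Lemma gmulgK (a b : G) : b * a * ginv a = b.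
Proof. by rewrite -gmulA gmulgV gmulg1. Qed.

Lemma gmulgKV (a b : G) : b * ginv a * a = b.
Proof. by rewrite -gmulA gmulV gmulg1. Qed.

Lemma gmulgI (a : G) : injective (gmul a).
Proof. by move=> b c e; rewrite -(gmulKg a b) e gmulKg. Qed.

Lemma ginv_unique (a b : G) : a * b = 1 -> b = ginv a.
Proof. by move=> e; apply: (@gmulgI a); rewrite e gmulgV. Qed.

Lemma ginvK (a : G) : ginv (ginv a) = a.
Proof. by symmetry; apply: ginv_unique; rewrite gmulV. Qed.

Lemma ginvM (a b : G) : ginv (a * b) = ginv b * ginv a.
Proof. by symmetry; apply: ginv_unique; rewrite -gmulA (gmulA b) gmulgV gmul1 gmulgV. Qed.

Lemma ginv1 : ginv 1 = 1.
Proof. by symmetry; apply: ginv_unique; rewrite gmul1. Qed.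

Lemma commute_ginv (a h : G) : a * h = h * a -> ginv a * h = h * ginv a.
Proof. by move=> c; apply: (@gmulgI a); rewrite gmulKVg gmulA c gmulgK. Qed.

Definition npow (a : G) (m : nat) : G := iter m (gmul a) 1.

Lemma npowS (a : G) m : npow a m.+1 = a * npow a m.
Proof. by []. Qed.

Lemma commute_npow (a h : G) m : a * h = h * a -> npow a m * h = h * npow a m.
Proof.
move=> c; elim: m => [|m IH]; first by rewrite /npow /= gmul1 gmulg1.
by rewrite npowS -gmulA IH !gmulA c.
Qed.

Lemma npowSr (a : G) m : npow a m.+1 = npow a m * a.
Proof. by rewrite npowS commute_npow. Qed.

Lemma npowD (a : G) m l : npow a (m + l) = npow a m * npow a l.
Proof.
elim: m => [|m IH]; first by rewrite /npow /= gmul1.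
by rewrite addSn npowS IH gmulA.
Qed.

Lemma gpowD1 (a : G) (k : int) : gpow a (k + 1) = gpow a k * a.
Proof.
case: k => [m|[|m]].
- have -> : (Posz m + 1 = Posz m.+1)%R by lia.
  exact: npowSr.
- have -> : (Negz 0 + 1 = Posz 0)%R by rewrite NegzE; lia.
  by rewrite /= gmulg1 gmulV.
- have -> : (Negz m.+1 + 1 = Negz m)%R by rewrite !NegzE; lia.
  by rewrite /= [in RHS]ginvM gmulgKV.
Qed.

Lemma gpowD (a : G) (k l : int) : gpow a (k + l) = gpow a k * gpow a l.
Proof.
have gpowDn j (m : nat) : gpow a (j + Posz m) = gpow a j * gpow a (Posz m).
  elim: m => [|m IH]; first by rewrite addr0 gmulg1.
  have -> : (j + Posz m.+1 = (j + Posz m) + 1)%R by lia.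
  have -> : (Posz m.+1 = Posz m + 1)%R by lia.
  by rewrite !gpowD1 IH gmulA.
case: l => [m|m]; first exact: gpowDn.
have e : (k = (k + Negz m) + Posz m.+1)%R by rewrite NegzE; lia.
by have := gpowDn (k + Negz m)%R m.+1; rewrite -e => ->; rewrite gmulgK.
Qed.

Lemma commute_gpow (a h : G) (k : int) : a * h = h * a -> gpow a k * h = h * gpow a k.
Proof.
move=> c; case: k => m; first exact: commute_npow.
by apply: commute_ginv; exact: (commute_npow m.+1 c).
Qed.

Lemma conj_subgroups_sym (H K : G -> Prop) : conj_subgroups H K -> conj_subgroups K H.
Proof.
case=> g Hg; exists (ginv g) => h; rewrite Hg ginvK.
by rewrite !gmulA gmulgV gmul1 gmulgK.
Qed.

Lemma conj_subgroups_trans (H K L : G -> Prop) :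
  conj_subgroups H K -> conj_subgroups K L -> conj_subgroups H L.
Proof. by case=> g Hg [g' Hg']; exists (g' * g) => h; rewrite Hg Hg' ginvM !gmulA. Qed.

Section GSetIso.
Variable G0 : G -> Prop.

Lemma gset_iso_refl (X : GSet G0) : gset_iso X X.
Proof. by exists id; split => //; exists id. Qed.

Lemma gset_iso_sym (X Y : GSet G0) : gset_iso X Y -> gset_iso Y X.
Proof.
case=> f [[f' fK f'K] Hf]; exists f'; split; first by exists f.
by move=> g o Hg; apply: (can_inj fK); rewrite Hf // !f'K.
Qed.

Lemma gset_iso_trans (X Y Z : GSet G0) : gset_iso X Y -> gset_iso Y Z -> gset_iso X Z.
Proof.
case=> f [bf Hf] [f' [bf' Hf']]; exists (f' \o f); split; first exact: bij_comp.
by move=> g o Hg /=; rewrite Hf // Hf'.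
Qed.

Lemma gset_isoP (X Y : GSet G0) : gset_iso X Y ->
  exists f : gs_car X -> gs_car Y,
    injective f /\ forall g o, G0 g -> f (act X g o) = act Y g (f o).
Proof. by case=> f [bf Hf]; exists f; split; [exact: bij_inj | exact: Hf]. Qed.

Lemma gset_iso_card (X Y : GSet G0) : gset_iso X Y -> #|gs_car X| = #|gs_car Y|.
Proof. by case=> f [/bij_eq_card]. Qed.

End GSetIso.
End GroupLaws.

Notation GSetT G := (@GSet G (fun _ => True)).

Section Stabilisers.
Variable G : Grp.
Local Notation "a * b" := (gmul a b).
Local Notation "1" := (gone G).

Lemma gactM (X : GSetT G) g h p : act X (g * h) p = act X g (act X h p).
Proof. exact: gs_actM. Qed.

Lemma gact1 (X : GSetT G) p : act X 1 p = p.
Proof. exact: gs_act1. Qed.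

Lemma gactK (X : GSetT G) g p : act X (ginv g) (act X g p) = p.
Proof. by rewrite -gactM gmulV gact1. Qed.

Lemma gactKV (X : GSetT G) g p : act X g (act X (ginv g) p) = p.
Proof. by rewrite -gactM gmulgV gact1. Qed.

Lemma gact_inj (X : GSetT G) g : injective (act X g).
Proof. exact: can_inj (gactK g). Qed.

Lemma gset_transitive_from (X : GSetT G) p0 :
  0 < #|gs_car X| -> (forall p, exists g, act X g p0 = p) -> gset_transitive X.
Proof.
move=> X0 Hp0; split => // p q.
have [g <-] := Hp0 p; have [g' <-] := Hp0 q.
by exists (g' * ginv g); split => //; rewrite gactM gactK.
Qed.

Definition stab (X : GSetT G) (p : gs_car X) (g : G) : Prop := act X g p = p.
Arguments stab : clear implicits.

Definition point_stab (X : GSetT G) : G -> Prop :=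
  if [pick p : gs_car X] is Some p then stab X p else fun _ => True.

Lemma point_stabE (X : GSetT G) : 0 < #|gs_car X| -> exists p, point_stab X = stab X p.
Proof.
move=> X0; rewrite /point_stab; case: pickP => [p _|none]; first by exists p.
by have [p _] := card_gt0P X0; have := none p.
Qed.

Lemma stab_subgroup (X : GSetT G) p : is_subgroup (stab X p).
Proof.
split; first exact: gact1.
split; first by move=> a b Ha Hb; rewrite /stab gactM Hb Ha.
by move=> a Ha; rewrite /stab -{1}Ha gactK.
Qed.

Lemma conj_stab_act (X : GSetT G) p c : conj_subgroups (stab X (act X c p)) (stab X p).
Proof.
exists (ginv c) => h; rewrite /stab ginvK !gactM; split => [->|e]; first exact: gactK.
by apply: (@gact_inj _ (ginv c)); rewrite e gactK.
Qed.

Lemma conj_stab_equiv (X Y : GSetT G) (f : gs_car X -> gs_car Y) p :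
  injective f -> (forall g o, f (act X g o) = act Y g (f o)) ->
  conj_subgroups (stab X p) (stab Y (f p)).
Proof.
move=> f_inj fE; exists 1 => h; rewrite ginv1 gmul1 gmulg1 /stab -fE.
by split => [->|/f_inj].
Qed.

Lemma stab_has_index (X : GSetT G) p : gset_transitive X -> has_index (stab X p) #|gs_car X|.
Proof.
case=> _ Xtr; pose gto y := proj1_sig (cid (Xtr p y)).
have gtoP y : act X (gto y) p = y by rewrite /gto; case: cid => g [].
exists (fun i => gto (enum_val i)) => g.
have stabE i : stab X p (ginv (gto (enum_val i)) * g) <-> act X g p = enum_val i.
  rewrite /stab gactM; split => [e|->]; last by rewrite -{2}(gtoP (enum_val i)) gactK.
  by rewrite -(gactKV (gto (enum_val i)) (act X g p)) e gtoP.
exists (enum_rank (act X g p)); split; first by apply/stabE; rewrite enum_rankK.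
by move=> i /stabE ->; rewrite enum_valK.
Qed.

(* The cardinality hypothesis spares constructing the inverse isomorphism. *)
Lemma gset_iso_conj_stab (X Y : GSetT G) p q :
  gset_transitive X -> #|gs_car Y| <= #|gs_car X| ->
  conj_subgroups (stab X p) (stab Y q) -> gset_iso X Y.
Proof.
case=> _ Xtr YX [c Hc].
pose q' := act Y (ginv c) q.
have stabE h : stab X p h <-> act Y h q' = q'.
  rewrite Hc /stab /q' !gactM; split => [e|->]; last exact: gactKV.
  by rewrite -{2}e gactK.
pose gto y := proj1_sig (cid (Xtr p y)).
have gtoP y : act X (gto y) p = y by rewrite /gto; case: cid => g [].
pose phi y := act Y (gto y) q'.
have phiE g : phi (act X g p) = act Y g q'.
  have /stabE : stab X p (ginv g * gto (act X g p)) by rewrite /stab gactM gtoP gactK.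
  by rewrite gactM => /(congr1 (act Y g)); rewrite gactKV.
have phi_inj : injective phi.
  move=> y1 y2; rewrite -(gtoP y1) -(gtoP y2) !phiE => e.
  have /stabE : act Y (ginv (gto y1) * gto y2) q' = q' by rewrite gactM -e gactK.
  by rewrite /stab gactM => e2; rewrite -{1}e2 gactKV.
exists phi; split; first exact: inj_card_bij.
by move=> g o _; rewrite -(gtoP o) -gactM !phiE gactM.
Qed.

Lemma coset_gset (H : G -> Prop) n :
  is_subgroup H -> has_index H n ->
  exists X : GSetT G, [/\ gset_transitive X, #|gs_car X| = n &
                          exists p, conj_subgroups (stab X p) H].
Proof.
case=> H1 [HM _] [t Ht].
pose a (g : G) (i : 'I_n) : 'I_n :=
  odflt i [pick j | `[< H (ginv (t j) * (g * t i)) >] ].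
have aP g i : H (ginv (t (a g i)) * (g * t i)).
  rewrite /a; case: pickP => [j /asboolP //|none].
  have [j [Hj _]] := Ht (g * t i).
  by have := none j; rewrite (asboolT Hj).
have aU g i j : H (ginv (t j) * (g * t i)) -> a g i = j.
  move=> Hj; have [l [_ Ul]] := Ht (g * t i).
  by rewrite -(Ul _ Hj) (Ul _ (aP g i)).
have a1 i : a 1 i = i by apply: aU; rewrite gmul1 gmulV.
have aM g h i : True -> True -> a (g * h) i = a g (a h i).
  move=> _ _; apply: aU.
  have := HM _ _ (aP g (a h i)) (aP h i).
  by rewrite -!gmulA (gmulA (t (a h i))) gmulgV gmul1 !gmulA.
pose X : GSetT G := Build_GSet a1 aM.
have [i0 _] := Ht 1.
exists X; split; last 1 first.
- exists i0, (ginv (t i0)) => h; rewrite ginvK /stab /=.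
  split => [e|Hh]; first by have := aP h i0; rewrite e gmulA.
  by apply: aU; rewrite gmulA.
- apply: (@gset_transitive_from X i0); first by rewrite card_ord (leq_ltn_trans _ (ltn_ord i0)).
  by move=> j; exists (t j * ginv (t i0)); apply: aU; rewrite gmulgKV gmulV.
- exact: card_ord.
Qed.

End Stabilisers.

Arguments stab {G} X p g.

Section DirectProduct.
Variables (G : Grp) (G0 : G -> Prop) (x : G).
Hypothesis Hd : direct_prod_infcyclic G0 x.
Local Notation "a * b" := (gmul a b).
Local Notation "1" := (gone G).

Lemma G0_1 : G0 1.
Proof. by case: Hd => [[]]. Qed.

Lemma G0_M a b : G0 a -> G0 b -> G0 (a * b).
Proof. by case: Hd => [[_ [H _]]] _; apply: H. Qed.

Lemma G0_V a : G0 a -> G0 (ginv a).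
Proof. by case: Hd => [[_ [_ H]]] _; apply: H. Qed.

Lemma G0_commute_gpow h k : G0 h -> gpow x k * h = h * gpow x k.
Proof. by case: Hd => _ [xC _] Hh; apply: commute_gpow; rewrite xC. Qed.

Lemma G0_commute_npow h m : G0 h -> npow x m * h = h * npow x m.
Proof. exact: (G0_commute_gpow (Posz m)). Qed.

Lemma decomp_exists g : exists hk : G * int, G0 hk.1 /\ g = hk.1 * gpow x hk.2.
Proof. by case: Hd => _ [_ [H _]]; have [h [k [? ?]]] := H g; exists (h, k). Qed.

Definition decomp g := proj1_sig (cid (decomp_exists g)).
Definition proj0 g := (decomp g).1.
Definition xdeg g := (decomp g).2.

Lemma proj0_G0 g : G0 (proj0 g).
Proof. by rewrite /proj0 /decomp; case: cid => -[h k] []. Qed.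

Lemma decompE g : g = proj0 g * gpow x (xdeg g).
Proof. by rewrite /proj0 /xdeg /decomp; case: cid => -[h k] []. Qed.

Lemma decomp_unique g h k : G0 h -> g = h * gpow x k -> proj0 g = h /\ xdeg g = k.
Proof.
move=> Hh e; case: Hd => _ [_ [_ U]].
by apply: U => //; [exact: proj0_G0 | rewrite -decompE].
Qed.

Lemma decompM g h : proj0 (g * h) = proj0 g * proj0 h /\ xdeg (g * h) = (xdeg g + xdeg h)%R.
Proof.
apply: decomp_unique; first by apply: G0_M; apply: proj0_G0.
rewrite gpowD {1}(decompE g) {1}(decompE h) -!gmulA; congr (_ * _).
by rewrite !gmulA G0_commute_gpow //; apply: proj0_G0.
Qed.

Lemma decomp_G0 h : G0 h -> proj0 h = h /\ xdeg h = 0%R.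
Proof. by move=> Hh; apply: decomp_unique => //; rewrite gmulg1. Qed.

Lemma decomp_gpow k : proj0 (gpow x k) = 1 /\ xdeg (gpow x k) = k.
Proof. by apply: decomp_unique; [exact: G0_1 | rewrite gmul1]. Qed.

Lemma proj0V g : proj0 (ginv g) = ginv (proj0 g).
Proof.
have := (decompM (ginv g) g).1; rewrite gmulV (decomp_G0 G0_1).1 => e.
by rewrite -(gmul1 (ginv (proj0 g))) e gmulgK.
Qed.

Lemma equivariant_G0_x (X Y : GSetT G) (f : gs_car X -> gs_car Y) :
  (forall h p, G0 h -> f (act X h p) = act Y h (f p)) ->
  (forall p, f (act X x p) = act Y x (f p)) ->
  forall g p, f (act X g p) = act Y g (f p).
Proof.
move=> fG0 fx.
have fV a : (forall p, f (act X a p) = act Y a (f p)) ->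
    forall p, f (act X (ginv a) p) = act Y (ginv a) (f p).
  by move=> fa p; rewrite -{2}(gactKV a p) fa gactK.
have fxn m p : f (act X (npow x m) p) = act Y (npow x m) (f p).
  elim: m p => [|m IH] p; first by rewrite /npow /= !gact1.
  by rewrite npowS !gactM fx IH.
have fxk k p : f (act X (gpow x k) p) = act Y (gpow x k) (f p).
  by case: k => m; [apply: fxn | apply: fV; exact: fxn m.+1].
by move=> g p; rewrite (decompE g) !gactM fG0 ?fxk //; apply: proj0_G0.
Qed.

End DirectProduct.

Section PermIntPower.
Variable T : finType.
Local Open Scope group_scope.

Definition expgz (s : {perm T}) (j : int) : {perm T} := s ^+ `|(j %% #[s]%:Z)%Z|%N.

Lemma modz_order (s : {perm T}) (j : int) : (j %% #[s]%:Z)%Z = Posz `|(j %% #[s]%:Z)%Z|%N.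
Proof. by rewrite gez0_abs // modz_ge0 // eqz_nat -lt0n order_gt0. Qed.

Lemma expgz_nat (s : {perm T}) (m : nat) : expgz s m = s ^+ m.
Proof. by rewrite /expgz modz_nat absz_nat expg_mod_order. Qed.

Lemma expgzD (s : {perm T}) (j l : int) : expgz s (j + l)%R = expgz s j * expgz s l.
Proof.
rewrite /expgz -expgD -modzDm (modz_order s j) (modz_order s l) -PoszD.
by rewrite modz_nat absz_nat expg_mod_order.
Qed.

Lemma expgzC (s : {perm T}) (j l : int) : commute (expgz s j) (expgz s l).
Proof. by rewrite /commute -!expgzD addrC. Qed.

Lemma commute_expgz (s : {perm T}) (f : T -> T) (j : int) :
  (forall p, f (s p) = s (f p)) -> forall p, f (expgz s j p) = expgz s j (f p).
Proof.
move=> fs; rewrite /expgz; elim: `|_|%N => [|m IH] p; first by rewrite !expg0 !perm1.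
by rewrite expgSr !permM fs IH.
Qed.

End PermIntPower.

Section TwistedGSet.
Variables (G : Grp) (G0 : G -> Prop) (x : G).
Hypothesis Hd : direct_prod_infcyclic G0 x.
Local Notation "a * b" := (gmul a b).
Local Notation "1" := (gone G).
Variable O : GSet G0.

(* Makes twisted_gset below total in a; it is only used on automorphisms. *)
Definition to_aut (a : {perm gs_car O}) : {perm gs_car O} :=
  if a \in aut_set O then a else 1%g.

Lemma to_aut_in a : to_aut a \in aut_set O.
Proof. by rewrite /to_aut; case: ifP => // _; apply: (group1 (aut_group O)). Qed.

Lemma to_autE a : a \in aut_set O -> to_aut a = a.
Proof. by rewrite /to_aut => ->. Qed.

Lemma aut_setP a h o : a \in aut_set O -> G0 h -> a (act O h o) = act O h (a o).
Proof. by rewrite inE => /asboolP aA Hh; apply: aA. Qed.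

Variables (a : {perm gs_car O}) (k : nat).
Local Notation T := (gs_car O * 'I_k)%type.

(* The G-set induced from the G0 x <x^k>-set O on which x^k acts by a:
   x moves (o, i) to (o, i + 1), except that (o, k - 1) goes to (a o, 0). *)
Definition twist_fun (p : T) : T :=
  (if p.2.+1 == k then to_aut a p.1 else p.1, ordS p.2).

Lemma twist_inj : injective twist_fun.
Proof.
move=> [o i] [o' i'] e; have ei : i = i' by apply: (@ordS_inj k); exact: (congr1 snd e).
subst i'; have := congr1 fst e; rewrite /twist_fun /=.
by case: ifP => _ => [/perm_inj ->|->].
Qed.

Definition twist : {perm T} := perm twist_inj.

Lemma twistE p : twist p = twist_fun p.
Proof. exact: permE. Qed.

Definition act_fst (h : G) (p : T) : T := (act O h p.1, p.2).

Lemma twist_act_fst h p : G0 h -> act_fst h (twist p) = twist (act_fst h p).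
Proof.
move=> Hh; rewrite !twistE /twist_fun /act_fst /=; case: ifP => // _.
by rewrite aut_setP // to_aut_in.
Qed.

Definition twisted_act (g : G) (p : T) : T :=
  expgz twist (xdeg Hd g) (act_fst (proj0 Hd g) p).

Lemma twisted_act1 p : twisted_act 1 p = p.
Proof.
rewrite /twisted_act; have [-> ->] := decomp_G0 Hd (G0_1 Hd).
by rewrite -[0%R]/(Posz 0) expgz_nat expg0 perm1 /act_fst gs_act1; case: p.
Qed.

Lemma twisted_actM g h p :
  True -> True -> twisted_act (g * h) p = twisted_act g (twisted_act h p).
Proof.
move=> _ _; rewrite /twisted_act; have [-> ->] := decompM Hd g h.
have G0proj := proj0_G0 Hd.
rewrite expgzD permM.
have -> : act_fst (proj0 Hd g * proj0 Hd h) p = act_fst (proj0 Hd g) (act_fst (proj0 Hd h) p).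
  by rewrite /act_fst /= gs_actM.
rewrite (@commute_expgz _ twist (act_fst (proj0 Hd g))); last by move=> q; apply: twist_act_fst.
by rewrite -!permM expgzC.
Qed.

Definition twisted_gset : GSetT G := Build_GSet twisted_act1 twisted_actM.

Lemma twisted_G0 h p : G0 h -> act twisted_gset h p = act_fst h p.
Proof.
move=> Hh; rewrite /= /twisted_act; have [-> ->] := decomp_G0 Hd Hh.
by rewrite -[0%R]/(Posz 0) expgz_nat expg0 perm1.
Qed.

Lemma twisted_npow m p : act twisted_gset (npow x m) p = (twist ^+ m)%g p.
Proof.
have [e1 e2] := decomp_gpow Hd m.
by rewrite /= /twisted_act [npow _ _]/(gpow x m) e1 e2 expgz_nat /act_fst gs_act1; case: p.
Qed.

Lemma twisted_x p : act twisted_gset x p = twist p.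
Proof. by have := twisted_npow 1 p; rewrite expg1 /npow /= gmulg1. Qed.

Lemma twist_expn_lt o (i : 'I_k) m : i + m < k ->
  exists2 j : 'I_k, val j = i + m & (twist ^+ m)%g (o, i) = (o, j).
Proof.
elim: m => [|m IH] lt; first by exists i; rewrite ?addn0 ?expg0 ?perm1.
rewrite expgSr permM; have [|j ej ->] := IH; first by apply: leq_trans lt; rewrite addnS.
have lt' : j.+1 < k by rewrite ej -addnS.
exists (ordS j); first by rewrite /= modn_small // ej addnS.
by rewrite twistE /twist_fun /= (ltn_eqF lt').
Qed.

Lemma twist_expn_k o (i : 'I_k) : (twist ^+ k)%g (o, i) = (to_aut a o, i).
Proof.
have ik := ltn_ord i.
have -> : (twist ^+ k = twist ^+ ((k - i.+1) + 1 + i))%g by congr (_ ^+ _)%g; lia.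
rewrite expgD permM addn1 expgSr permM.
have [|j ej ->] := @twist_expn_lt o i (k - i.+1); first by lia.
have ej1 : j.+1 = k by rewrite [nat_of_ord j]ej; lia.
rewrite twistE /twist_fun /= ej1 eqxx.
have eo : val (ordS j) = 0 by rewrite /= ej1 modnn.
have [|j' ej' ->] := @twist_expn_lt (to_aut a o) (ordS j) i; first by rewrite eo.
by congr (_, _); apply: val_inj; rewrite ej' eo.
Qed.

Lemma twisted_npow_k o (i : 'I_k) : act twisted_gset (npow x k) (o, i) = (to_aut a o, i).
Proof. by rewrite twisted_npow twist_expn_k. Qed.

Lemma twisted_card : #|gs_car twisted_gset| = (#|gs_car O| * k)%N.
Proof. by rewrite card_prod card_ord. Qed.

Lemma twisted_transitive : gset_transitive O -> 0 < k -> gset_transitive twisted_gset.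
Proof.
case=> O0 Otr k0; have [o0 _] := card_gt0P O0.
apply: (@gset_transitive_from _ twisted_gset (o0, Ordinal k0)).
  by rewrite twisted_card muln_gt0 O0 k0.
move=> [o i]; have [h [Hh <-]] := Otr o0 o.
exists (npow x i * h); rewrite gactM [act _ h _]twisted_G0 // twisted_npow /act_fst /=.
have [|j ej ->] := @twist_expn_lt (act O h o0) (Ordinal k0) i; first by rewrite add0n.
by congr (_, _); apply: val_inj; rewrite ej.
Qed.

End TwistedGSet.

Section TwistedIso.
Variables (G : Grp) (G0 : G -> Prop) (x : G).
Hypothesis Hd : direct_prod_infcyclic G0 x.
Local Notation twisted := (twisted_gset Hd).

Lemma twisted_iso_conjg (O : GSet G0) (a c : {perm gs_car O}) k :
  a \in aut_set O -> c \in aut_set O -> gset_iso (twisted a k) (twisted (a ^ c)%g k).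
Proof.
move=> aA cA; have acA : (a ^ c)%g \in aut_set O by rewrite groupJ.
pose f (p : gs_car O * 'I_k) := (c p.1, p.2).
exists f; split.
  by exists (fun p => ((c^-1)%g p.1, p.2)) => -[o i]; rewrite /f /= ?permK ?permKV.
move=> g p _; apply: (equivariant_G0_x Hd) => [h [o i] Hh|[o i]].
  by rewrite !twisted_G0 // /act_fst /f /= aut_setP.
rewrite !twisted_x !twistE /twist_fun /f /=.
by case: ifP => // _; rewrite !to_autE // conjgE !permM permK.
Qed.

Lemma twisted_equiv_layer (O O' : GSet G0) (a : {perm gs_car O}) (a' : {perm gs_car O'})
    k k' (k0 : 0 < k) (f : gs_car (twisted a k) -> gs_car (twisted a' k')) :
  gset_transitive O -> injective f ->
  (forall g p, f (act (twisted a k) g p) = act (twisted a' k') g (f p)) ->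
  exists (psi : gs_car O -> gs_car O') (i1 : 'I_k'),
    [/\ injective psi, forall h o, G0 h -> psi (act O h o) = act O' h (psi o) &
        forall o, f (o, Ordinal k0) = (psi o, i1)].
Proof.
case=> O0 Otr f_inj fE; have [o0 _] := card_gt0P O0.
pose psi o := (f (o, Ordinal k0)).1; pose i1 := (f (o0, Ordinal k0)).2.
have layer o : (f (o, Ordinal k0)).2 = i1.
  have [h [Hh <-]] := Otr o0 o.
  by have := fE h (o0, Ordinal k0); rewrite !twisted_G0 // /act_fst /= => ->.
have fE0 o : f (o, Ordinal k0) = (psi o, i1) by rewrite -(layer o) /psi; case: (f _).
exists psi, i1; split => //.
  by move=> o o' e; have /f_inj [] : f (o, Ordinal k0) = f (o', Ordinal k0) by rewrite !fE0 e.
move=> h o Hh; have := fE h (o, Ordinal k0).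
by rewrite !twisted_G0 // /act_fst /= !fE0 => -[].
Qed.

Lemma twisted_iso_base (O O' : GSet G0) (a : {perm gs_car O}) (a' : {perm gs_car O'}) k k' :
  0 < k -> 0 < k' -> gset_transitive O -> gset_transitive O' ->
  gset_iso (twisted a k) (twisted a' k') -> gset_iso O O'.
Proof.
move=> k0 k0' Otr O'tr iso.
have [f [f_inj fE]] := gset_isoP iso.
have [f' [f'_inj f'E]] := gset_isoP (gset_iso_sym iso).
have [psi [_ [psi_inj psiE _]]] := twisted_equiv_layer k0 Otr f_inj (fun g p => fE g p I).
have [psi' [_ [psi'_inj _ _]]] := twisted_equiv_layer k0' O'tr f'_inj (fun g p => f'E g p I).
exists psi; split => //; apply: inj_card_bij => //.
exact: leq_card psi'_inj.
Qed.

(* Comparing the action of x^k on the layer O x {0} shows that the layer map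
   conjugates a into a'. *)
Lemma twisted_iso_conj (O : GSet G0) (a a' : {perm gs_car O}) k :
  0 < k -> gset_transitive O -> a \in aut_set O -> a' \in aut_set O ->
  gset_iso (twisted a k) (twisted a' k) -> a' \in (a ^: aut_group O)%g.
Proof.
move=> k0 Otr aA a'A iso.
have [f [f_inj fE]] := gset_isoP iso.
have [psi [i1 [psi_inj psiE fE0]]] := twisted_equiv_layer k0 Otr f_inj (fun g p => fE g p I).
pose p := perm psi_inj.
have pA : p \in aut_set O by rewrite inE; apply/asboolP => g o Hg; rewrite !permE psiE.
have psi_a o : psi (a o) = a' (psi o).
  have := fE (npow x k) (o, Ordinal k0) I.
  by rewrite twisted_npow_k !fE0 twisted_npow_k !to_autE // => -[].
apply/imsetP; exists p => //; apply/permP => z.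
by rewrite conjgE !permM -{1}(permKV p z) !permE psi_a.
Qed.

Lemma twisted_iso_transport (O O' : GSet G0) (a : {perm gs_car O}) k :
  a \in aut_set O -> gset_iso O O' ->
  exists2 a' : {perm gs_car O'}, a' \in aut_set O' & gset_iso (twisted a k) (twisted a' k).
Proof.
move=> aA [i [[i' iK i'K] iE]].
have i_inj : injective i by apply: can_inj iK.
pose a' := perm (inj_comp i_inj (inj_comp (@perm_inj _ a) (can_inj i'K))).
have a'E z : a' z = i (a (i' z)) by rewrite permE.
have i'E h z : G0 h -> i' (act O' h z) = act O h (i' z).
  by move=> Hh; apply: (i_inj); rewrite iE // !i'K.
have a'A : a' \in aut_set O'.
  by rewrite inE; apply/asboolP => g z Hg; rewrite !a'E i'E // aut_setP // iE.
exists a' => //; pose f (p : gs_car O * 'I_k) := (i p.1, p.2).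
exists f; split; first by exists (fun p => (i' p.1, p.2)) => -[o j]; rewrite /f /= ?iK ?i'K.
move=> g p _; apply: (equivariant_G0_x Hd) => [h [o j] Hh|[o j]].
  by rewrite !twisted_G0 // /act_fst /f /= iE.
rewrite !twisted_x !twistE /twist_fun /f /=.
by case: ifP => // _; rewrite !to_autE // a'E iK.
Qed.

End TwistedIso.

Section G0Orbit.
Variables (G : Grp) (G0 : G -> Prop) (x : G).
Hypothesis Hd : direct_prod_infcyclic G0 x.
Local Notation "a * b" := (gmul a b).
Variables (Y : GSetT G) (p0 : gs_car Y).

Definition in_orbit0 (y : gs_car Y) : bool := `[< exists2 h, G0 h & act Y h p0 = y >].

Lemma in_orbit0_act h y : G0 h -> in_orbit0 (act Y h y) = in_orbit0 y.
Proof.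
have actP h' y' : G0 h' -> in_orbit0 y' -> in_orbit0 (act Y h' y').
  move=> Hh' /asboolP [h'' Hh'' <-]; apply/asboolP; exists (h' * h'') => //.
    exact: (G0_M Hd).
  by rewrite gactM.
move=> Hh; apply/idP/idP; last exact: actP.
by move/(actP _ _ (G0_V Hd Hh)); rewrite gactK.
Qed.

Lemma in_orbit0_p0 : in_orbit0 p0.
Proof. by apply/asboolP; exists (gone G); [exact: (G0_1 Hd) | rewrite gact1]. Qed.

Lemma in_orbit0_npow m y :
  in_orbit0 y -> in_orbit0 (act Y (npow x m) y) = in_orbit0 (act Y (npow x m) p0).
Proof.
case/asboolP=> h Hh <-.
by rewrite -gactM (G0_commute_npow Hd) // gactM in_orbit0_act.
Qed.

Definition orbit0 := {y : gs_car Y | in_orbit0 y}.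

Definition orbit0_act (g : G) (z : orbit0) : orbit0 :=
  exist _ (act Y (proj0 Hd g) (val z)) (etrans (in_orbit0_act _ (proj0_G0 Hd g)) (valP z)).

Lemma orbit0_act1 z : orbit0_act (gone G) z = z.
Proof. by apply: val_inj; rewrite /= (decomp_G0 Hd (G0_1 Hd)).1 gact1. Qed.

Lemma orbit0_actM g h z : G0 g -> G0 h -> orbit0_act (g * h) z = orbit0_act g (orbit0_act h z).
Proof. by move=> Hg Hh; apply: val_inj; rewrite /= (decompM Hd g h).1 gactM. Qed.

Definition orbit0_gset : GSet G0 := Build_GSet orbit0_act1 orbit0_actM.

Lemma orbit0_gset_val h z : G0 h -> val (act orbit0_gset h z) = act Y h (val z).
Proof. by move=> Hh; rewrite /= (decomp_G0 Hd Hh).1. Qed.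

Lemma orbit0_transitive : gset_transitive orbit0_gset.
Proof.
split; first by apply/card_gt0P; exists (exist _ p0 in_orbit0_p0).
move=> [y yO] [y' y'O]; have /asboolP [h Hh ey] := yO; have /asboolP [h' Hh' ey'] := y'O.
have Hhh : G0 (h' * ginv h) by apply: (G0_M Hd) => //; apply: (G0_V Hd).
exists (h' * ginv h); split => //.
by apply: val_inj; rewrite orbit0_gset_val //= -ey -ey' gactM gactK.
Qed.

Lemma return_exists : exists m, (0 < m) && in_orbit0 (act Y (npow x m) p0).
Proof.
pose px := perm (@gact_inj G Y x).
have npowE m y : act Y (npow x m) y = (px ^+ m)%g y.
  elim: m y => [|m IH] y; first by rewrite expg0 perm1 /npow /= gact1.
  by rewrite npowS gactM IH expgSr permM permE.
by exists #[px]%g; rewrite order_gt0 npowE expg_order perm1 in_orbit0_p0.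
Qed.

Definition return_time := ex_minn return_exists.
Local Notation k := return_time.

Lemma return_time_gt0 : 0 < k.
Proof. by rewrite /k; case: ex_minnP => m /andP[]. Qed.

Lemma return_time_min m : 0 < m -> in_orbit0 (act Y (npow x m) p0) -> k <= m.
Proof. by move=> m0 mO; rewrite /k; case: ex_minnP => k' _; apply; rewrite m0. Qed.

Lemma return_map_in_orbit0 (z : orbit0) : in_orbit0 (act Y (npow x k) (val z)).
Proof. by rewrite in_orbit0_npow ?(valP z) //; rewrite /k; case: ex_minnP => m /andP[]. Qed.

Definition return_map (z : orbit0) : orbit0 := exist in_orbit0 _ (return_map_in_orbit0 z).

Lemma return_map_inj : injective return_map.
Proof. by move=> z z' /(congr1 val) /= /gact_inj /val_inj. Qed.

Definition return_aut : {perm gs_car orbit0_gset} := perm return_map_inj.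

Lemma return_aut_in : return_aut \in aut_set orbit0_gset.
Proof.
rewrite inE; apply/asboolP => h z Hh; rewrite !permE; apply: val_inj.
by rewrite /= (decomp_G0 Hd Hh).1 -!gactM (G0_commute_npow Hd).
Qed.

Local Notation twisted := (twisted_gset Hd return_aut k).

Definition unfold (p : gs_car twisted) : gs_car Y := act Y (npow x p.2) (val p.1).

Lemma unfold_equivariant g p : unfold (act twisted g p) = act Y g (unfold p).
Proof.
move: g p; apply: (equivariant_G0_x Hd) => [h [z i] Hh|[z i]].
  by rewrite twisted_G0 // /act_fst /unfold /= (decomp_G0 Hd Hh).1 -!gactM (G0_commute_npow Hd).
rewrite twisted_x twistE /twist_fun /unfold /=.
case: ifP => [/eqP ik|ik].
  by rewrite to_autE ?return_aut_in // permE /= ik modnn /npow /= gact1 -gactM -npowS ik.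
have ik' : i.+1 < k by rewrite ltn_neqAle ik ltn_ord.
by rewrite modn_small // npowS gactM.
Qed.

(* By minimality of the return time k. *)
Lemma unfold_layers (z z' : orbit0) (i i' : nat) : i <= i' < k ->
  act Y (npow x i) (val z) = act Y (npow x i') (val z') -> i = i' /\ z = z'.
Proof.
case/andP=> ii' i'k; rewrite -(subnKC ii') npowD gactM => /gact_inj e.
suff d0 : i' - i = 0 by move: e; rewrite d0 addn0 /npow /= gact1 => /val_inj.
apply/eqP; apply: contraT; rewrite -lt0n => d_gt0.
have := return_time_min d_gt0; rewrite -(in_orbit0_npow _ (valP z')) -e (valP z) => /(_ isT).
by rewrite leqNgt (leq_ltn_trans (leq_subr _ _) i'k).
Qed.

Lemma unfold_inj : injective unfold.
Proof.
have val_ord (i i' : 'I_k) : val i = val i' -> i = i' by apply: val_inj.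
move=> [z i] [z' i'] e; rewrite /unfold /= in e.
case: (leqP i i') => c.
  by have [/val_ord -> ->] := unfold_layers (introT andP (conj c (ltn_ord i'))) e.
by have [/val_ord -> ->] := unfold_layers (introT andP (conj (ltnW c) (ltn_ord i))) (esym e).
Qed.

Hypothesis Ytr : gset_transitive Y.

Lemma unfold_surj y : exists p, unfold p = y.
Proof.
have [g [_ <-]] := Ytr.2 p0 y.
exists (act twisted g (exist _ p0 in_orbit0_p0, Ordinal return_time_gt0)).
by rewrite unfold_equivariant /unfold /= /npow /= gact1.
Qed.

Lemma gset_iso_twisted_orbit0 : gset_iso Y twisted.
Proof.
apply: gset_iso_sym; exists unfold; split => [|g p _]; last exact: unfold_equivariant.
apply: inj_card_bij; first exact: unfold_inj.
pose r y := proj1_sig (cid (unfold_surj y)).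
have rK : cancel r unfold by move=> y; rewrite /r; case: cid.
exact: leq_card (can_inj rK).
Qed.

End G0Orbit.

Lemma gset_iso_twisted (G : Grp) (G0 : G -> Prop) (x : G) (Hd : direct_prod_infcyclic G0 x)
    (Y : GSetT G) :
  gset_transitive Y ->
  exists (O : GSet G0) (a : {perm gs_car O}) (k : nat),
    [/\ gset_transitive O, a \in aut_set O, 0 < k & gset_iso Y (twisted_gset Hd a k)].
Proof.
case=> Y0 Ytr; have [p0 _] := card_gt0P Y0.
exists (orbit0_gset Hd p0), (return_aut Hd p0), (return_time Hd p0); split.
- exact: orbit0_transitive.
- exact: return_aut_in.
- exact: return_time_gt0.
- exact: gset_iso_twisted_orbit0.
Qed.

Section FinitelyManyGSets.
Variables (G : Grp) (G0 : G -> Prop) (x : G).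
Hypothesis Hd : direct_prod_infcyclic G0 x.
Local Notation "1" := (gone G).
Variable S : seq G.
Hypothesis genS : forall g, Defs.generated S g.

(* A G0-set is determined up to isomorphism by how the G0-parts of the
   generators act, and on a carrier 'I_d there are finitely many such data. *)
Definition gset_matches d (f : {ffun 'I_(size S) -> {ffun 'I_d -> 'I_d}}) (X : GSet G0) :=
  exists e : gs_car X -> 'I_d, bijective e /\
    forall (i : 'I_(size S)) o, e (act X (proj0 Hd (nth 1 S i)) o) = f i (e o).
Arguments gset_matches : clear implicits.

Lemma gset_matches_iso d f X1 X2 : gset_matches d f X1 -> gset_matches d f X2 -> gset_iso X1 X2.
Proof.
case=> e1 [[e1' e1K e1'K] H1] [e2 [[e2' e2K e2'K] H2]].
pose phi o := e2' (e1 o).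
have phi_bij : bijective phi.
  by exists (fun o => e1' (e2 o)) => o; rewrite /phi ?e2'K ?e1K ?e1'K ?e2K.
have actK (O : GSet G0) h z : G0 h -> act O (ginv h) (act O h z) = z.
  by move=> Hh; rewrite -gs_actM ?gmulV ?gs_act1 //; apply: (G0_V Hd).
have actKV (O : GSet G0) h z : G0 h -> act O h (act O (ginv h) z) = z.
  by move=> Hh; rewrite -{1}(ginvK h) actK //; apply: (G0_V Hd).
suff phiE g : Defs.generated S g ->
    forall o, phi (act X1 (proj0 Hd g) o) = act X2 (proj0 Hd g) (phi o).
  by exists phi; split => // h o Hh; have := phiE h (genS h) o; rewrite (decomp_G0 Hd Hh).1.
elim => [|s sS|a b _ IHa _ IHb|a _ IHa] o.
- by rewrite (decomp_G0 Hd (G0_1 Hd)).1 !gs_act1.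
- have [j jS <-] := In_nth 1 sS.
  by apply: (can_inj e2K); rewrite /phi e2'K (H1 (Ordinal jS)) (H2 (Ordinal jS)) e2'K.
- by rewrite (decompM Hd a b).1 !gs_actM ?IHa ?IHb //; apply: proj0_G0.
- have Ha := proj0_G0 Hd a.
  by rewrite proj0V -{2}(actKV X1 _ o Ha) IHa actK.
Qed.

Definition unit_gset : GSet G0 :=
  @Build_GSet G G0 unit (fun _ o => o) (fun _ => erefl) (fun _ _ _ _ _ => erefl).

Variable n : nat.
Definition admissible (X : GSet G0) : Prop := gset_transitive X /\ (#|gs_car X| %| n)%N.

Definition matching_gset d f : GSet G0 :=
  if pselect (exists X, admissible X /\ gset_matches d f X) is left H then proj1_sig (cid H)
  else unit_gset.
Arguments matching_gset : clear implicits.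

Lemma transitive_gset_reps : 0 < n -> exists Os, class_reps admissible (@gset_iso G G0) Os.
Proof.
move=> n0.
pose L := List.flat_map (fun d => List.map (@matching_gset d)
            (enum {ffun 'I_(size S) -> {ffun 'I_d -> 'I_d}})) (iota 0 n.+1).
apply: (@class_reps_of_cover _ _ _ L); [exact: gset_iso_refl | exact: gset_iso_trans |].
move=> Y PY; pose d := #|gs_car Y|.
pose f : {ffun 'I_(size S) -> {ffun 'I_d -> 'I_d}} :=
  [ffun i : 'I_(size S) =>
     [ffun j : 'I_d => enum_rank (act Y (proj0 Hd (nth 1 S i)) (enum_val j))]].
have MY : gset_matches d f Y.
  exists enum_rank; split; first by exists enum_val; [exact: enum_rankK | exact: enum_valK].
  by move=> i o; rewrite !ffunE enum_rankK.
have [X [PX MX] eX] : exists2 X, admissible X /\ gset_matches d f X & matching_gset d f = X.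
  rewrite /matching_gset; case: pselect => [H|nH]; last by case: nH; exists Y.
  by exists (proj1_sig (cid H)) => //; case: cid.
exists X; split => //; last exact: gset_matches_iso MY MX.
apply/List.in_flat_map; exists d; split.
  by apply/InP; rewrite mem_iota add0n ltnS (dvdn_leq n0 PY.2).
by apply/List.in_map_iff; exists f; split; last by apply/InP; rewrite mem_enum.
Qed.

End FinitelyManyGSets.

Section Counting.
Variables (G : Grp) (G0 : G -> Prop) (x : G).
Hypothesis Hd : direct_prod_infcyclic G0 x.
Variable n : nat.
Hypothesis n_gt0 : 0 < n.
Variable Os : seq (GSet G0).
Hypothesis OsR : class_reps (admissible n) (@gset_iso G G0) Os.

Let O_ j := nth (unit_gset G0) Os j.
Let aut_classes j := enum (classes (aut_group (O_ j))).
Let layers j := n %/ #|gs_car (O_ j)|.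
Let class_rep j r : {perm gs_car (O_ j)} := repr (nth set0 (aut_classes j) r).
Let X_ j r := twisted_gset Hd (class_rep j r) (layers j).
Let indices := [seq (j, r) | j <- iota 0 (size Os), r <- iota 0 (size (aut_classes j))].

Lemma mem_indices j r : ((j, r) \in indices) = (j < size Os) && (r < size (aut_classes j)).
Proof.
apply/allpairsPdep/andP => [[j' [r' [jin rin [-> ->]]]]|[jl rl]].
  by move: jin rin; rewrite !mem_iota !add0n.
by exists j, r; rewrite !mem_iota !add0n.
Qed.

Lemma aut_classes_nth j r : r < size (aut_classes j) ->
  nth set0 (aut_classes j) r \in classes (aut_group (O_ j)).
Proof. by move=> rl; rewrite -mem_enum; apply: mem_nth. Qed.

Lemma class_rep_in j r : r < size (aut_classes j) -> class_rep j r \in aut_set (O_ j).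
Proof. by move/aut_classes_nth/repr_classesP => []. Qed.

Section Layer.
Variable j : nat.
Hypothesis jOs : j < size Os.

Lemma O_admissible : admissible n (O_ j).
Proof. by case: OsR => /List.Forall_forall OsP _; apply/OsP/nth_In. Qed.

Lemma card_O_layers : (#|gs_car (O_ j)| * layers j)%N = n.
Proof. by rewrite mulnC divnK //; case: O_admissible. Qed.

Lemma layers_gt0 : 0 < layers j.
Proof.
have := card_O_layers; rewrite lt0n; case: eqP => // ->; rewrite muln0 => n0.
by move: n_gt0; rewrite -n0.
Qed.

Lemma X_transitive r : gset_transitive (X_ j r).
Proof. by apply: twisted_transitive; [case: O_admissible | exact: layers_gt0]. Qed.

Lemma card_X r : #|gs_car (X_ j r)| = n.
Proof. by rewrite twisted_card card_O_layers. Qed.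

End Layer.

Lemma X_iso_inj j1 r1 j2 r2 : (j1, r1) \in indices -> (j2, r2) \in indices ->
  gset_iso (X_ j1 r1) (X_ j2 r2) -> (j1, r1) = (j2, r2).
Proof.
rewrite !mem_indices => /andP [jl1 rl1] /andP [jl2 rl2] iso.
have isoO := twisted_iso_base (layers_gt0 jl1) (layers_gt0 jl2)
  (O_admissible jl1).1 (O_admissible jl2).1 iso.
have ej : j1 = j2.
  have OsD := OsR.2.1; case: (ltngtP j1 j2) => // lt.
    by case: (ForallOrdPairs_nth (unit_gset G0) OsD (introT andP (conj lt jl2))).
  by case: (ForallOrdPairs_nth (unit_gset G0) OsD (introT andP (conj lt jl1))); apply: gset_iso_sym.
subst j2; have cj := twisted_iso_conj (layers_gt0 jl1) (O_admissible jl1).1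
  (class_rep_in rl1) (class_rep_in rl2) iso.
have eC : nth set0 (aut_classes j1) r1 = nth set0 (aut_classes j1) r2.
  have /repr_classesP [_ ->] := aut_classes_nth rl1.
  have /repr_classesP [_ ->] := aut_classes_nth rl2.
  exact/esym/class_eqP.
congr (_, _); apply/eqP.
by rewrite -(nth_uniq set0 rl1 rl2 (enum_uniq _)) eC.
Qed.

Lemma X_cover (Y : GSetT G) : gset_transitive Y -> #|gs_car Y| = n ->
  exists2 jr, jr \in indices & gset_iso Y (X_ jr.1 jr.2).
Proof.
move=> Ytr cardY; have [O [a [k [Otr aA k0 isoY]]]] := gset_iso_twisted Hd Ytr.
have cardOk : (#|gs_car O| * k)%N = n by rewrite -cardY (gset_iso_card isoY) twisted_card.
have /List.Exists_exists [O' [O'Os isoO]] : List.Exists (gset_iso O) Os.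
  by apply: OsR.2.2; split => //; rewrite -cardOk dvdn_mulr.
have [j jl ej] := In_nth (unit_gset G0) O'Os.
have isoOj : gset_iso O (O_ j) by rewrite /O_ ej.
have [a' a'A iso_a'] := twisted_iso_transport Hd k aA isoOj.
have ek : k = layers j.
  by rewrite /layers -(gset_iso_card isoOj) -cardOk mulKn //; case: Otr.
subst k.
pose C := (a' ^: aut_group (O_ j))%g.
have CC : C \in classes (aut_group (O_ j)) by apply: mem_classes.
pose r := index C (aut_classes j).
have rl : r < size (aut_classes j) by rewrite index_mem mem_enum.
have /imsetP [c cA ebr] : class_rep j r \in C.
  by rewrite /class_rep nth_index ?mem_enum //; exact: mem_repr_classes CC.
exists (j, r); first by rewrite mem_indices jl.
apply: gset_iso_trans isoY (gset_iso_trans iso_a' _).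
by rewrite /= /X_ ebr; apply: twisted_iso_conjg.
Qed.

Lemma index_subgroup_reps :
  class_reps (fun H : G -> Prop => is_subgroup H /\ has_index H n) (@conj_subgroups G)
    (List.map (fun jr => point_stab (X_ jr.1 jr.2)) indices).
Proof.
have stabX j r : j < size Os -> exists p, point_stab (X_ j r) = stab (X_ j r) p.
  by move=> jl; apply: point_stabE; rewrite card_X.
apply: class_reps_map.
- apply: allpairs_uniq_dep => [|j _|[j1 r1] [j2 r2] _ _ [-> ->]] //; exact: iota_uniq.
- move=> [j r]; rewrite mem_indices => /andP [jl _] /=.
  have [p ->] := stabX j r jl; split; first exact: stab_subgroup.
  by rewrite -(card_X jl r); apply: stab_has_index; apply: X_transitive.
- move=> [j1 r1] [j2 r2] jr1 jr2; move: (jr1) (jr2).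
  rewrite !mem_indices => /andP [jl1 _] /andP [jl2 _] /=.
  have [p1 ->] := stabX j1 r1 jl1; have [p2 ->] := stabX j2 r2 jl2 => cj.
  apply: X_iso_inj => //; apply: gset_iso_conj_stab cj; first exact: X_transitive.
  by rewrite !card_X.
- move=> H [Hsub Hind]; have [Y [Ytr cardY [p cp]]] := coset_gset Hsub Hind.
  have [[j r] jr isoYX] := X_cover Ytr cardY.
  have jl : j < size Os by move: jr; rewrite mem_indices => /andP[].
  exists (j, r) => //=; have [q ->] := stabX j r jl.
  have [phi [phi_inj phiE]] := gset_isoP isoYX.
  have [g [_ <-]] := (X_transitive jl r).2 (phi p) q.
  apply: conj_subgroups_trans (conj_subgroups_sym cp) _.
  apply: conj_subgroups_trans (conj_stab_equiv p phi_inj (fun g o => phiE g o I)) _.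
  exact: conj_subgroups_sym (conj_stab_act _ _).
Qed.

(* NirrE: Aut(O) has as many irreducible representations as conjugacy classes. *)
Lemma sum_Nirr_indices : sumn (List.map (fun O => Nirr (aut_group O)) Os) = size indices.
Proof.
rewrite size_allpairs_dep -[in LHS](mkseq_nth (unit_gset G0) Os) /mkseq.
have -> : forall (B : Type) (g : GSet G0 -> B) (s : seq (GSet G0)), List.map g s = map g s.
  by move=> B g; elim=> //= a s ->.
rewrite -map_comp; congr sumn; apply: eq_map => j /=.
by rewrite NirrE size_iota /aut_classes -cardE.
Qed.

Lemma count_pairs : exists N, num_conj_classes_index G n N /\ num_pairs G0 n N.
Proof.
exists (size indices); split.
  exists (List.map (fun jr => point_stab (X_ jr.1 jr.2)) indices).
  by split; [exact: index_subgroup_reps | rewrite List.length_map -size_length].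
exists Os, (List.map (fun O => Nirr (aut_group O)) Os); split => //; split.
  by apply: Forall2_map_r => O; apply: num_irr_reps_Nirr.
exact: sum_Nirr_indices.
Qed.

End Counting.

Theorem proposition9p5 (G : Grp) (G0 : G -> Prop) (x : G) :
  finitely_generated G ->
  direct_prod_infcyclic G0 x ->
  forall n : nat, (1 <= n)%N ->
    exists N : nat, num_conj_classes_index G n N /\ num_pairs G0 n N.
Proof.
move=> [S genS] Hd n n_gt0.
have [Os OsR] := transitive_gset_reps Hd genS n_gt0.
exact: (count_pairs Hd n_gt0 OsR).
Qed.
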